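(* Let $P^{(1)},\dots,P^{(m)}$ be phase-free $n$-qubit Pauli strings in sparse form, each of weight at most $k$. In the computational model where dictionary lookup and update for a key of length $r$ cost $O(r)$ expected time, the certification-with-witness algorithm (process $i=1,\dots,m$: compute $c=(N-Z)/2$ with $Z=\sum_{A\subseteq\operatorname{supp}(P^{(i)})}(-2)^{|A|}\sum_{a\in\mathcal{L}_{P^{(i)}}(A)}D[(A,a)]$; if $c>0$ scan $j<i$ for the first $j$ with $|\operatorname{conf}(P^{(j)},P^{(i)})|$ odd and return $(j,i)$; otherwise increment $D[(A,P^{(i)}|_A)]$ for all $A\subseteq\operatorname{supp}(P^{(i)})$ and increment $N$; if the loop ends return ``all commute'') returns either a correct all-commuting certificate (all strings pairwise commute) or a correct anticommuting witness pair, in expected time $O(mk3^k)$.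
   Context: A phase-free $n$-qubit Pauli string is $P=(P_1,\dots,P_n)\in\{I,X,Y,Z\}^n$ with $I,X,Y,Z$ the identity and Pauli matrices, identified with $P_1\otimes\cdots\otimes P_n$, stored sparsely as pairs $(j,P_j)$ for $j\in\operatorname{supp}(P)=\{j:P_j\neq I\}$; its weight is $|\operatorname{supp}(P)|$. $\operatorname{conf}(P,Q)=\{j:P_j\neq I, Q_j\neq I, P_j\neq Q_j\}$. $D$ is a dictionary (initially empty, absent keys zero) keyed by labeled patterns $(A,a)$, $A$ a set of positions and $a:A\to\{X,Y,Z\}$; $N$ starts at $0$. $\mathcal{L}_P(A)=\{a:A\to\{X,Y,Z\}: a(j)\neq P_j\ \forall j\in A\}$, and $P|_A$ is $j\mapsto P_j$ on $A$. *)

From HB Require Import structures.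
From mathcomp Require Import all_boot all_order all_algebra all_field.
Set Implicit Arguments. Unset Strict Implicit. Unset Printing Implicit Defensive.
Import Order.TTheory GRing.Theory Num.Theory.

Inductive pauli := PI | PX | PY | PZ.

Definition pauli_to_ord (p : pauli) : 'I_4 :=
  match p with PI => inord 0 | PX => inord 1 | PY => inord 2 | PZ => inord 3 end.
Definition ord_to_pauli (i : 'I_4) : pauli :=
  match val i with 0 => PI | 1 => PX | 2 => PY | _ => PZ end.
Lemma pauli_ordK : cancel pauli_to_ord ord_to_pauli.
Proof. by case; rewrite /ord_to_pauli /= inordK. Qed.
HB.instance Definition _ := Finite.copy pauli (can_type pauli_ordK).

Definition pstring (n : nat) := {ffun 'I_n -> pauli}.
Definition pId (n : nat) : pstring n := [ffun => PI].

Definition supp n (P : pstring n) : {set 'I_n} := [set j | P j != PI].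
Definition weight n (P : pstring n) : nat := #|supp P|.
Definition conf n (P Q : pstring n) : {set 'I_n} :=
  [set j | [&& P j != PI, Q j != PI & P j != Q j]].

(* Single-qubit matrices in the computational basis (false = |0>, true = |1>). *)
Local Open Scope ring_scope.
Definition pmat (p : pauli) (x y : bool) : algC :=
  match p with
  | PI => (x == y)%:R
  | PX => (x != y)%:R
  | PY => if x == y then 0 else if x then 'i else - 'i
  | PZ => if x == y then (if x then -1 else 1) else 0
  end.

(* Matrix of P_1 (x) ... (x) P_n, indexed by computational basis states. *)
Definition basis n := {ffun 'I_n -> bool}.
Definition pop n (P : pstring n) (x y : basis n) : algC :=
  \prod_(j : 'I_n) pmat (P j) (x j) (y j).
Definition opmul n (A B : basis n -> basis n -> algC) (x y : basis n) : algC :=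
  \sum_(z : basis n) A x z * B z y.

Definition pcommute n (P Q : pstring n) : Prop :=
  forall x y, opmul (pop P) (pop Q) x y = opmul (pop Q) (pop P) x y.
Definition panticommute n (P Q : pstring n) : Prop :=
  forall x y, opmul (pop P) (pop Q) x y = - opmul (pop Q) (pop P) x y.
Local Close Scope ring_scope.

(* A labeled pattern (A, a) with a : A -> {X,Y,Z} is encoded as the Pauli string
   K with supp K = A and K j = a j on A (a bijective encoding). *)
Definition dict n := pstring n -> nat.

Definition restrict n (P : pstring n) (A : {set 'I_n}) : pstring n :=
  [ffun j => if j \in A then P j else PI].

Definition inL n (P : pstring n) (A : {set 'I_n}) (K : pstring n) : bool :=
  (supp K == A) && [forall j in A, K j != P j].

Definition Zval n (D : dict n) (P : pstring n) : int :=
  (\sum_(A in powerset (supp P))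
     (-2) ^+ #|A| * (\sum_(K : pstring n | inL P A K) (D K)%:Z))%R.

Definition cval n (D : dict n) (N : nat) (P : pstring n) : rat :=
  ((N%:Q - (Zval D P)%:~R) / 2)%R.

Definition update n (D : dict n) (P : pstring n) : dict n :=
  fun K => D K + #|[set A in powerset (supp P) | restrict P A == K]|.

Inductive outcome := AllCommute | Witness of nat & nat | Fail.

(* prefix = the strings P^(0..i-1) already processed (0-based indices). *)
Fixpoint certify_aux n (prefix : seq (pstring n)) (D : dict n) (N : nat)
    (rest : seq (pstring n)) : outcome :=
  match rest with
  | [::] => AllCommute
  | P :: rest' =>
      if (0 < cval D N P)%R then
        let j := find (fun Q => odd #|conf Q P|) prefix in
        if j < size prefix then Witness j (size prefix) else Fail
      else certify_aux (rcons prefix P) (update D P) N.+1 rest'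
  end.

Definition certify n (Ps : seq (pstring n)) : outcome :=
  certify_aux [::] (fun _ => 0) 0 Ps.

(* A dictionary lookup/update on a key of length r costs r+1 units (O(r)
   expected time, charged as its expectation bound); each conflict-parity test
   between two sparse strings costs |supp P| + |supp Q| + 1 units;
   incrementing N costs 1. *)
Definition lookup_cost n (P : pstring n) : nat :=
  \sum_(A in powerset (supp P)) \sum_(K : pstring n | inL P A K) (#|A| + 1).
Definition update_cost n (P : pstring n) : nat :=
  (\sum_(A in powerset (supp P)) (#|A| + 1)) + 1.
Definition scan_cost n (prefix : seq (pstring n)) (P : pstring n) : nat :=
  let j := find (fun Q => odd #|conf Q P|) prefix in
  \sum_(Q <- take j.+1 prefix) (weight Q + weight P + 1).

Fixpoint cost_aux n (prefix : seq (pstring n)) (D : dict n) (N : nat)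
    (rest : seq (pstring n)) : nat :=
  match rest with
  | [::] => 0
  | P :: rest' =>
      lookup_cost P +
      (if (0 < cval D N P)%R then scan_cost prefix P
       else update_cost P + cost_aux (rcons prefix P) (update D P) N.+1 rest')
  end.

Definition cost n (Ps : seq (pstring n)) : nat := cost_aux [::] (fun _ => 0) 0 Ps.

(* Single-qubit Paulis anticommute exactly at conflicting positions, so P and Q
   commute iff |conf(P, Q)| is even.  After Q_1, ..., Q_N have been inserted, the
   key (A, Q_i|_A) lies in L_P(A) iff A is inside conf(Q_i, P), so by the binomial
   theorem Z = sum_i sum_(A in conf(Q_i, P)) (-2)^|A| = sum_i (-1)^|conf(Q_i, P)|
   and c = (N - Z)/2 counts the earlier strings anticommuting with P.  Hence the
   scan starts only when a witness exists, and otherwise all pairs commute.  The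
   sets L_P(A) are disjoint families of strings with at most three letters per
   position of supp P, so a lookup touches at most 3^k keys; an update touches
   2^k keys and the single final scan at most m strings. *)

From HB Require Import structures.
From mathcomp Require Import all_boot all_order all_algebra all_field.
From mathcomp Require Import ring zify.
Set Implicit Arguments. Unset Strict Implicit. Unset Printing Implicit Defensive.
Import Order.TTheory GRing.Theory Num.Theory.
Local Open Scope ring_scope.

Lemma sum_powerset_expr (R : comPzSemiRingType) (T : finType) (S : {set T}) (x : R) :
  \sum_(A in powerset S) x ^+ #|A| = (1 + x) ^+ #|S|.
Proof.
rewrite (partition_big (fun A : {set T} => inord #|A| : 'I_#|S|.+1) xpredT) //=.
rewrite exprDn; apply: eq_bigr => i _.
rewrite (eq_bigr (fun _ => x ^+ i)); last first.
  move=> A /andP[]; rewrite powersetE => sAS /eqP <-.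
  by rewrite inordK // ltnS subset_leq_card.
rewrite sumr_const expr1n mul1r -cards_draws; congr (_ *+ _).
apply: eq_card => A; rewrite inE unfold_in /= powersetE.
case sAS: (A \subset S) => //=.
by rewrite -val_eqE /= inordK // ltnS subset_leq_card.
Qed.

Lemma sumr_sign_count (R : comPzRingType) (T : Type) (p : pred T) (s : seq T) :
  \sum_(x <- s) (-1) ^+ p x = (size s)%:R - (count p s)%:R *+ 2 :> R.
Proof.
elim: s => [|x s IH]; first by rewrite big_nil mul0rn subr0.
rewrite big_cons IH /= -addn1 !natrD mulrnDl.
by case: (p x); rewrite /= ?expr0 ?expr1; ring.
Qed.

Lemma pauli_eqE (p q : pauli) :
  (p == q) = match p, q with PI, PI | PX, PX | PY, PY | PZ, PZ => true | _, _ => false end.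
Proof. by case: p; case: q; rewrite ?eqxx //; apply/eqP. Qed.

Definition pauli_conflict (p q : pauli) : bool := [&& p != PI, q != PI & p != q].

Lemma pmat_mulC p q x y :
  \sum_(b : bool) pmat p x b * pmat q b y =
  (-1) ^+ pauli_conflict p q * \sum_(b : bool) pmat q x b * pmat p b y.
Proof.
have ii : 'i * 'i = -1 :> algC by rewrite -expr2 sqrCi.
by case: p; case: q; case: x; case: y;
  rewrite /pauli_conflict !pauli_eqE /= !big_bool /=
    ?(mul0r, mulr0, mul1r, mulr1, add0r, addr0, mulrN, mulNr, opprK, ii, oppr0, expr0, expr1).
Qed.

Lemma opmul_popE n (P Q : pstring n) x y :
  opmul (pop P) (pop Q) x y =
  \prod_j \sum_(b : bool) pmat (P j) (x j) b * pmat (Q j) b (y j).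
Proof.
rewrite /opmul bigA_distr_bigA /=; apply: eq_bigr => z _.
by rewrite /pop -big_split.
Qed.

Lemma opmul_popC n (P Q : pstring n) x y :
  opmul (pop P) (pop Q) x y = (-1) ^+ #|conf P Q| * opmul (pop Q) (pop P) x y.
Proof.
rewrite !opmul_popE (eq_bigr _ (fun j _ => pmat_mulC _ _ _ _)) big_split /=.
congr (_ * _); rewrite -prodr_const [RHS]big_mkcond /=.
by apply: eq_bigr => j _; rewrite inE -/(pauli_conflict _ _); case: pauli_conflict.
Qed.

Lemma pcommute_even n (P Q : pstring n) : ~~ odd #|conf P Q| -> pcommute P Q.
Proof. by move=> even_PQ x y; rewrite opmul_popC -signr_odd (negbTE even_PQ) mul1r. Qed.

Lemma panticommute_odd n (P Q : pstring n) : odd #|conf P Q| -> panticommute P Q.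
Proof. by move=> odd_PQ x y; rewrite opmul_popC -signr_odd odd_PQ mulN1r. Qed.

Lemma confC n (P Q : pstring n) : conf P Q = conf Q P.
Proof. by apply/setP => j; rewrite !inE [Q j == P j]eq_sym andbCA. Qed.

Lemma confpp n (P : pstring n) : conf P P = set0.
Proof. by apply/setP => j; rewrite !inE eqxx !andbF. Qed.

Lemma conf_sub_supp n (P Q : pstring n) : conf Q P \subset supp P.
Proof. by apply/subsetP => j; rewrite !inE => /and3P[]. Qed.

Lemma supp_restrict n (Q : pstring n) (B : {set 'I_n}) :
  B \subset supp Q -> supp (restrict Q B) = B.
Proof.
move=> /subsetP sBQ; apply/setP => j; rewrite !inE ffunE.
by case: ifP => [/sBQ | _]; rewrite ?inE ?eqxx.
Qed.

Lemma inL_restrict n (P Q : pstring n) (A B : {set 'I_n}) : B \subset supp Q ->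
  inL P A (restrict Q B) = (B == A) && [forall j in A, Q j != P j].
Proof.
move=> sBQ; rewrite /inL supp_restrict //.
case: eqP => //= ->; apply: eq_forallb => j; rewrite ffunE.
by case: (j \in A).
Qed.

Lemma subset_conf n (P Q : pstring n) (A : {set 'I_n}) : A \subset supp P ->
  (A \subset conf Q P) = (A \subset supp Q) && [forall j in A, Q j != P j].
Proof.
move=> /subsetP sAP; apply/subsetP/andP => [sAC | [/subsetP sAQ /forall_inP QP] j jA].
  split; first by apply/subsetP => j /sAC; rewrite !inE => /and3P[].
  by apply/forall_inP => j /sAC; rewrite inE => /and3P[].
by have := sAQ j jA; have := sAP j jA; rewrite !inE => -> ->; rewrite QP.
Qed.

(* The only key inserted for Q that can lie in L_P(A) is (A, Q|_A). *)
Lemma sum_update_keys_inL n (P Q : pstring n) (A : {set 'I_n}) : A \subset supp P ->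
  (\sum_(K | inL P A K) #|[set B in powerset (supp Q) | restrict Q B == K]|)%N
  = (A \subset conf Q P : nat).
Proof.
move=> sAP.
transitivity (\sum_(B in powerset (supp Q)) inL P A (restrict Q B))%N.
  rewrite (eq_bigr (fun K => \sum_(B in powerset (supp Q)) (restrict Q B == K)))%N;
    last by move=> K _; rewrite -sum1_card big_mkcond [RHS]big_mkcond;
            apply: eq_bigr => B _; rewrite inE; case: (_ \in _); case: (_ == K).
  rewrite exchange_big; apply: eq_bigr => B _.
  rewrite big_mkcond (bigD1 (restrict Q B)) //= eqxx big1 ?addn0; first by case: ifP.
  by move=> K /negbTE; rewrite eq_sym => ->; case: ifP.
rewrite subset_conf //.
rewrite (eq_bigr (fun B => (B == A) && [forall j in A, Q j != P j] : nat));
  last by move=> B; rewrite powersetE => /inL_restrict ->.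
have [sAQ | nsAQ] := boolP (A \subset supp Q).
  by rewrite (bigD1 A) ?powersetE //= eqxx big1 ?addn0 // => B /andP[_ /negbTE ->].
rewrite big1 // => B; rewrite powersetE; case: eqP => [-> | //].
by rewrite (negbTE nsAQ).
Qed.

Lemma Zval_update n (D : dict n) (P Q : pstring n) :
  Zval (update D Q) P = Zval D P + (-1) ^+ #|conf Q P|.
Proof.
have sumz := big_morph Posz PoszD (erefl 0%:Z).
rewrite /Zval /update.
under eq_bigr => A /[!powersetE] sAP.
  rewrite -sumz big_split /= sum_update_keys_inL // PoszD sumz mulrDr.
  over.
rewrite big_split /=; congr (_ + _).
rewrite -(sum_powerset_expr (conf Q P) (-2 : int)) [LHS]big_mkcond [RHS]big_mkcond.
apply: eq_bigr => A _; rewrite !powersetE.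
have [sAC | _] := boolP (A \subset conf Q P); last by case: ifP => //= _; rewrite mulr0.
by rewrite (subset_trans sAC (conf_sub_supp P Q)) mulr1.
Qed.

Definition dict_of n (s : seq (pstring n)) : dict n := foldl (@update n) (fun=> 0%N) s.

Lemma Zval_dict_of n (s : seq (pstring n)) (P : pstring n) :
  Zval (dict_of s) P = \sum_(Q <- s) (-1) ^+ #|conf Q P|.
Proof.
elim/last_ind: s => [|s Q IH].
  by rewrite big_nil /Zval big1 // => A _; rewrite big1 ?mulr0.
by rewrite /dict_of foldl_rcons -/(dict_of s) Zval_update IH big_rcons /= addrC.
Qed.

Lemma cval_dict_of n (s : seq (pstring n)) (P : pstring n) :
  cval (dict_of s) (size s) P = (count (fun Q => odd #|conf Q P|) s)%:R.
Proof.
rewrite /cval Zval_dict_of.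
under eq_bigr do rewrite -signr_odd.
by rewrite sumr_sign_count; field.
Qed.

Lemma certify_aux_correct n (prefix rest : seq (pstring n)) :
  {in prefix &, forall Q R, ~~ odd #|conf Q R|} ->
  let s := prefix ++ rest in
  match certify_aux prefix (dict_of prefix) (size prefix) rest with
  | AllCommute => {in s &, forall Q R, ~~ odd #|conf Q R|}
  | Witness j i => (j < i < size s)%N /\ odd #|conf (nth (pId n) s j) (nth (pId n) s i)|
  | Fail => False
  end.
Proof.
elim: rest prefix => [|P rest IH] prefix even_prefix /=; first by rewrite cats0.
rewrite cval_dict_of ltr0n -has_count.
case: ifP => [has_odd | /negbT no_odd].
  rewrite -has_find has_odd nth_cat -has_find has_odd nth_cat ltnn subnn /=.
  by rewrite size_cat /= addnS ltnS leq_addr; split=> //; apply: (nth_find (pId n) has_odd).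
have even_prefixP : {in rcons prefix P &, forall Q R, ~~ odd #|conf Q R|}.
  have even_P Q : Q \in prefix -> ~~ odd #|conf Q P|.
    by move=> Qp; apply: contra no_odd => odd_QP; apply/hasP; exists Q.
  move=> Q R; rewrite !mem_rcons !inE => /predU1P[-> | Qp] /predU1P[-> | Rp].
  - by rewrite confpp cards0.
  - by rewrite confC even_P.
  - exact: even_P.
  - exact: even_prefix.
by have := IH _ even_prefixP; rewrite /dict_of foldl_rcons size_rcons cat_rcons.
Qed.

Lemma certify_correct n (Ps : seq (pstring n)) :
  match certify Ps with
  | AllCommute => forall i j, (i < size Ps)%N -> (j < size Ps)%N ->
                    pcommute (nth (pId n) Ps i) (nth (pId n) Ps j)
  | Witness j i => (j < i < size Ps)%N /\
                    panticommute (nth (pId n) Ps j) (nth (pId n) Ps i)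
  | Fail => False
  end.
Proof.
have even_nil : {in [::] &, forall Q R : pstring n, ~~ odd #|conf Q R|} by [].
have := certify_aux_correct Ps even_nil.
rewrite /certify /=; case: certify_aux => // [even_Ps i j lt_i lt_j | j i [lt_ji odd_ji]].
  by apply/pcommute_even/even_Ps; apply: mem_nth.
by split=> //; apply: panticommute_odd.
Qed.

Local Open Scope nat_scope.

Lemma card_pauli : #|{: pauli}| = 4.
Proof.
rewrite -(card_ord 4); apply: (bij_eq_card (f := pauli_to_ord)).
exists ord_to_pauli; first exact: pauli_ordK.
by case=> -[|[|[|[|m]]]] lt_m4 //; apply/val_inj; rewrite /= inordK.
Qed.

Definition key_choices n (P : pstring n) (j : 'I_n) : pred pauli :=
  if P j == PI then pred1 PI else predC1 (P j).

Lemma card_key_family n (P : pstring n) :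
  #|[pred K : pstring n | K \in family (key_choices P)]| = 3 ^ weight P.
Proof.
rewrite card_family foldrE big_map big_enum /=.
rewrite (eq_bigr (fun j => if j \in supp P then 3 else 1)); last first.
  by move=> j _; rewrite /key_choices inE; case: eqP => _ /=; rewrite ?card1 ?cardC1 ?card_pauli.
by rewrite -big_mkcond prod_nat_const.
Qed.

Lemma inL_key_family n (P K : pstring n) (A : {set 'I_n}) :
  A \subset supp P -> inL P A K -> K \in family (key_choices P).
Proof.
move=> /subsetP sAP /andP[/eqP suppK /forall_inP K_ne_P]; apply/familyP => j.
rewrite /key_choices; case: eqP => [Pj | /eqP Pj] /=.
  apply/negPn/negP => Kj.
  by have := sAP j; rewrite -suppK !inE Pj eqxx => /(_ Kj).
have [jA | jA] := boolP (j \in A); first by rewrite inE K_ne_P.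
by move: jA; rewrite -suppK inE negbK => /eqP ->; rewrite inE eq_sym.
Qed.

(* Since inL P A K forces A = supp K, the sets L_P(A) are disjoint. *)
Lemma sum_card_inL n (P : pstring n) :
  \sum_(A in powerset (supp P)) #|[pred K | inL P A K]| <= 3 ^ weight P.
Proof.
rewrite -card_key_family -sum1_card.
under eq_bigr do rewrite -sum1_card.
rewrite (exchange_big_dep (mem (family (key_choices P)))) /=; last first.
  by move=> A K; rewrite powersetE; apply: inL_key_family.
apply: leq_sum => K _; rewrite sum1dep_card -(cards1 (supp K)).
by apply/subset_leq_card/subsetP => A; rewrite !inE => /andP[_ /andP[/eqP-> _]].
Qed.

Lemma lookup_cost_le n (P : pstring n) : lookup_cost P <= (weight P).+1 * 3 ^ weight P.
Proof.
apply: (@leq_trans (\sum_(A in powerset (supp P)) #|[pred K | inL P A K]| * (weight P).+1)).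
  apply: leq_sum => A; rewrite powersetE => sAP; rewrite -sum_nat_const.
  by apply: leq_sum => K _; rewrite addn1 ltnS subset_leq_card.
by rewrite -big_distrl /= mulnC; apply: leq_mul (leqnn _) (sum_card_inL P).
Qed.

Lemma update_cost_le n (P : pstring n) : update_cost P <= 2 * ((weight P).+1 * 3 ^ weight P).
Proof.
have sum_le : \sum_(A in powerset (supp P)) (#|A| + 1) <= 2 ^ weight P * (weight P).+1.
  rewrite -card_powerset -sum_nat_const; apply: leq_sum => A; rewrite powersetE => sAP.
  by rewrite addn1 ltnS subset_leq_card.
have exp_le : 2 ^ weight P <= 3 ^ weight P by case: (weight P) => // w; rewrite leq_exp2r.
have := expn_gt0 3 (weight P); rewrite /update_cost; nia.
Qed.

Lemma scan_cost_le n k (prefix : seq (pstring n)) (P : pstring n) :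
  {in prefix, forall Q, weight Q <= k} -> weight P <= k ->
  scan_cost prefix P <= size prefix * (2 * k).+1.
Proof.
move=> w_prefix wP; rewrite /scan_cost; set s := take _ prefix.
apply: (@leq_trans (\sum_(Q <- s) (2 * k).+1)).
  by rewrite !big_seq; apply: leq_sum => Q /mem_take /w_prefix; lia.
by rewrite big_const_seq count_predT iter_addn_0 mulnC leq_mul2r size_take_min geq_minr orbT.
Qed.

(* Potential argument: a pending string pays at most 5 units of (k+1) 3^k (lookup,
   update, and its share of the single final scan), a processed one 2 units. *)
Lemma cost_aux_le n k (prefix rest : seq (pstring n)) (D : dict n) (N : nat) :
  {in prefix ++ rest, forall Q, weight Q <= k} ->
  cost_aux prefix D N rest <= (2 * size prefix + 5 * size rest) * (k.+1 * 3 ^ k).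
Proof.
have unit_mono w : w <= k -> w.+1 * 3 ^ w <= k.+1 * 3 ^ k.
  by move=> le_wk; rewrite leq_mul ?leq_pexp2l.
elim: rest prefix D N => [|P rest IH] prefix D N w_all //=.
have wP : weight P <= k by apply: w_all; rewrite mem_cat mem_head orbT.
have w_prefix : {in prefix, forall Q, weight Q <= k}.
  by move=> Q Qp; apply: w_all; rewrite mem_cat Qp.
have := leq_trans (lookup_cost_le P) (unit_mono _ wP).
have := leq_trans (update_cost_le P) (leq_mul (leqnn 2) (unit_mono _ wP)).
have := scan_cost_le w_prefix wP.
have := IH (rcons prefix P) (update D P) N.+1; rewrite cat_rcons size_rcons => /(_ w_all).
have := expn_gt0 3 k.
set B := k.+1 * 3 ^ k; set X := 3 ^ k.
case: ifP => _; nia.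
Qed.

Theorem corollary2 :
  exists C : nat,
  forall (n k : nat) (Ps : seq (pstring n)),
    (forall P, P \in Ps -> weight P <= k) ->
    match certify Ps with
    | AllCommute => forall i j, i < size Ps -> j < size Ps ->
                      pcommute (nth (pId n) Ps i) (nth (pId n) Ps j)
    | Witness j i => j < i < size Ps /\
                      panticommute (nth (pId n) Ps j) (nth (pId n) Ps i)
    | Fail => False
    end
    /\ cost Ps <= C * size Ps * k.+1 * 3 ^ k.
Proof.
exists 5 => n k Ps w_Ps; split; first exact: certify_correct.
have := @cost_aux_le n k [::] Ps (fun=> 0) 0 w_Ps.
by rewrite muln0 add0n -!mulnA.
Qed.
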